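(* Let $A,C$ be logically independent events and consider assessments with $P(C|A)=x>0$. Then $(C|A)\wedge\bar C=x\,\bar A\bar C$, and the iterated conditional $\bar A\,|\,\big((C|A)\wedge\bar C\big)$, defined as $\bar A\wedge(C|A)\wedge\bar C+\mu\,(1-(C|A)\wedge\bar C)$ with $\mu$ its prevision, equals $1$ (i.e. its only coherent prevision is $\mu=1$ and it takes value $1$ in every outcome). *)

From Stdlib Require Import Reals List Bool.
Import ListNotations.
Open Scope R_scope.

Definition indic {W : Type} (E : W -> bool) (w : W) : R := if E w then 1 else 0.
Definition sure {W : Type} : W -> bool := fun _ => true.
Definition ev_not {W : Type} (E : W -> bool) : W -> bool := fun w => negb (E w).

Definition logically_independent {W : Type} (A C : W -> bool) : Prop :=
  (exists w, A w = true /\ C w = true) /\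
  (exists w, A w = true /\ C w = false) /\
  (exists w, A w = false /\ C w = true) /\
  (exists w, A w = false /\ C w = false).

(* Conditional event E|H (consequent, antecedent). An unconditional event E
   is identified with E|Omega, i.e. CEv E sure. *)
Record cevent (W : Type) := CEv { cons_ : W -> bool; cond_ : W -> bool }.
Arguments CEv {W} _ _.
Arguments cons_ {W} _ _.
Arguments cond_ {W} _ _.

(* Gilio–Sanfilippo conjunction of conditional events E_1|H_1 ,..., E_n|H_n:
   value 0 if some E_i|H_i is false (H_i true, E_i false); 1 if all are true;
   otherwise (none false, the set S of void ones nonempty) the prevision
   of the conjunction of the void ones, given here by the assessment
   [p mask] where [mask] marks (by true) the void conditional events. *)
Definition conjunction {W : Type} (es : list (cevent W)) (p : list bool -> R)
  (w : W) : R :=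
  if existsb (fun e => cond_ e w && negb (cons_ e w)) es then 0
  else if forallb (fun e => cond_ e w) es then 1
  else p (map (fun e => negb (cond_ e w)) es).

Definition iter_cond {W : Type} (EQ Q : W -> R) (mu : R) (w : W) : R :=
  EQ w + mu * (1 - Q w).

(* Coherence (betting scheme) of the prevision mu of the iterated conditional:
   for every stake s, the gain s * (X - mu) is not uniformly negative on the
   outcomes where the conditioning quantity Q is not zero (where Q = 0 the
   bet is called off, X = mu there). *)
Definition coherent_iter {W : Type} (EQ Q : W -> R) (mu : R) : Prop :=
  forall s : R, exists w, Q w <> 0 /\ s * (iter_cond EQ Q mu w - mu) >= 0.

(* Both conjunctions reduce to x * indicator of (not A /\ not C): they vanish
   whenever A or C is true, and when A and C are both false the only void
   member is C|A, so their value is P(C|A) = x.  Hence not-A /\ Q coincides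
   with Q, and for any nonnegative Q the iterated conditional Q + mu (1 - Q)
   has gain s Q (1 - mu): it is identically 1 at mu = 1, while any mu <> 1 is
   beaten by the stake s = mu - 1 wherever Q > 0. *)
From Stdlib Require Import Reals List Bool Lra.
Import ListNotations.
Open Scope R_scope.

Lemma conjunction_CA_notC (W : Type) (A C : W -> bool) (p : list bool -> R) (w : W) :
  conjunction [CEv C A; CEv (ev_not C) sure] p w =
  p [true; false] * indic (fun v => (negb (A v) && negb (C v))%bool) w.
Proof.
  unfold conjunction, indic, ev_not, sure; simpl.
  destruct (A w), (C w); simpl; ring.
Qed.

Lemma conjunction_notA_CA_notC (W : Type) (A C : W -> bool) (p : list bool -> R) (w : W) :
  conjunction [CEv (ev_not A) sure; CEv C A; CEv (ev_not C) sure] p w =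
  p [false; true; false] * indic (fun v => (negb (A v) && negb (C v))%bool) w.
Proof.
  unfold conjunction, indic, ev_not, sure; simpl.
  destruct (A w), (C w); simpl; ring.
Qed.

Section IterCondOfEqualConjunction.

Variables (W : Type) (EQ Q : W -> R).
Hypothesis EQ_Q : forall w, EQ w = Q w.

Lemma iter_cond_sub_eq (mu : R) (w : W) :
  iter_cond EQ Q mu w - mu = Q w * (1 - mu).
Proof. unfold iter_cond; rewrite EQ_Q; ring. Qed.

Lemma iter_cond_eq1 (w : W) : iter_cond EQ Q 1 w = 1.
Proof. unfold iter_cond; rewrite EQ_Q; ring. Qed.

Lemma coherent_iter_eq1 (mu : R) :
  (forall w, 0 <= Q w) -> (exists w, Q w <> 0) ->
  coherent_iter EQ Q mu <-> mu = 1.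
Proof.
  intros Q_ge0 [w0 Qw0]; split.
  - intros coh; destruct (coh (mu - 1)) as [w [Qw gain]].
    rewrite iter_cond_sub_eq in gain.
    assert (Q_gt0 : 0 < Q w) by (specialize (Q_ge0 w); lra).
    assert (sq0 : (mu - 1) * (mu - 1) <= 0).
    { apply (Rmult_le_reg_l (Q w)); nra. }
    nra.
  - intros -> s; exists w0; split; [exact Qw0|].
    rewrite iter_cond_sub_eq; lra.
Qed.

End IterCondOfEqualConjunction.

Theorem mainTheorem9 (W : Type) (A C : W -> bool) (x : R)
  (p2 p3 : list bool -> R) :
  logically_independent A C ->
  0 < x -> x <= 1 ->
  (* P(C|A) = x : prevision of the conjunction whose only void member is C|A *)
  p2 [true; false] = x ->
  p3 [false; true; false] = x ->
  let Q := conjunction [CEv C A; CEv (ev_not C) sure] p2 in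
  let AQ := conjunction [CEv (ev_not A) sure; CEv C A; CEv (ev_not C) sure] p3 in
  (forall w, Q w = x * indic (fun v => (negb (A v) && negb (C v))%bool) w) /\
  (forall mu, coherent_iter AQ Q mu <-> mu = 1) /\
  (forall w, iter_cond AQ Q 1 w = 1).
Proof.
  intros [_ [_ [_ [w0 [A_w0 C_w0]]]]] x_gt0 _ p2_x p3_x Q AQ.
  assert (Q_val : forall w,
    Q w = x * indic (fun v => (negb (A v) && negb (C v))%bool) w).
  { intro w; unfold Q; rewrite conjunction_CA_notC, p2_x; reflexivity. }
  assert (AQ_Q : forall w, AQ w = Q w).
  { intro w; unfold AQ; rewrite conjunction_notA_CA_notC, p3_x, Q_val; reflexivity. }
  assert (Q_ge0 : forall w, 0 <= Q w).
  { intro w; rewrite Q_val; unfold indic; destruct (_ && _)%bool; lra. }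
  assert (Q_w0 : Q w0 <> 0).
  { rewrite Q_val; unfold indic; rewrite A_w0, C_w0; simpl; lra. }
  split; [exact Q_val | split].
  - intro mu; exact (coherent_iter_eq1 W AQ Q AQ_Q mu Q_ge0 (ex_intro _ w0 Q_w0)).
  - exact (iter_cond_eq1 W AQ Q AQ_Q).
Qed.
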